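(* Consider the network system $(\Sigma,\Pi,\mathcal G)$ and suppose every agent $\Sigma_i$ and every controller $\Pi_e$ is MEICMP. Let $K$ and $\Gamma$ be the sums of the integral functions of the agents and controllers respectively. For any 4-tuple of vectors $(\mathrm u,\mathrm y,\zeta,\mu)$ with $\mathrm u,\mathrm y\in\mathbb R^{d|\mathbb V|}$, $\zeta,\mu\in\mathbb R^{d|\mathbb E|}$, the following are equivalent: (i) $(\mathrm u,\mathrm y,\zeta,\mu)$ is a steady state of the closed loop; (ii) $(\mathrm u,\mu)$ and $(\mathrm y,\zeta)$ are dual optimal solutions of (OFP) and (OPP), i.e. $(\mathrm u,\mu)$ is feasible and optimal for (OFP), $(\mathrm y,\zeta)$ is feasible and optimal for (OPP), and $K(\mathrm u)+\Gamma^\star(\mu)+K^\star(\mathrm y)+\Gamma(\zeta)=0$.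
   Context: Graph and network: $\mathcal G=(\mathbb V,\mathbb E)$ finite graph with arbitrarily oriented edges, incidence matrix $E$ ($E_{ik}=-1$, $E_{jk}=1$ for edge $k=(i,j)$, other entries of column $k$ zero), $d\ge1$, $\mathcal E=E\otimes I_d$. Agents $\Sigma_i$: $\dot x_i=f_i(x_i,u_i,\mathrm w_i)$, $y_i=h_i(x_i,u_i,\mathrm w_i)$ with $u_i,y_i\in\mathbb R^d$, $\mathrm w_i$ a fixed constant; controllers $\Pi_e$: $\dot\eta_e=\phi_e(\eta_e,\zeta_e)$, $\mu_e=\psi_e(\eta_e,\zeta_e)$, $\zeta_e,\mu_e\in\mathbb R^d$; closed loop $(\Sigma,\Pi,\mathcal G)$: $\zeta=\mathcal E^Ty$, $u=-\mathcal E\mu$ (stacked). Steady-state relations: $k_i=\{(\mathrm u_i,\mathrm y_i):\exists\mathrm x_i,\ f_i(\mathrm x_i,\mathrm u_i,\mathrm w_i)=0,\ \mathrm y_i=h_i(\mathrm x_i,\mathrm u_i,\mathrm w_i)\}$, $\gamma_e=\{(\zeta_e,\mu_e):\exists\eta_e,\ \phi_e(\eta_e,\zeta_e)=0,\ \mu_e=\psi_e(\eta_e,\zeta_e)\}$, stacked $k,\gamma$. A 4-tuple of constants $(\mathrm u,\mathrm y,\zeta,\mu)$ is a steady state of the closed loop if there are constant states $\mathrm x_i,\eta_e$ with $f_i(\mathrm x_i,\mathrm u_i,\mathrm w_i)=0$, $\mathrm y_i=h_i(\mathrm x_i,\mathrm u_i,\mathrm w_i)$, $\phi_e(\eta_e,\zeta_e)=0$,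 $\mu_e=\psi_e(\eta_e,\zeta_e)$, $\zeta=\mathcal E^T\mathrm y$, $\mathrm u=-\mathcal E\mu$. Cyclic monotonicity: $R\subseteq\mathbb R^d\times\mathbb R^d$ is cyclically monotone (CM) if for all $N\ge1$ and all $(u_1,y_1),\dots,(u_N,y_N)\in R$, $\sum_{i=1}^N y_i^T(u_i-u_{i-1})\ge0$ with $u_0=u_N$; it is maximal CM if it is CM and not strictly contained in a larger CM relation. Passivity: a system with input $u$, output $y$, state $x$ is passive with respect to a steady-state pair $(\mathrm u,\mathrm y)$ if there is a storage function $S(x)\ge0$ with $S(x(t_1))-S(x(t_0))\le\int_{t_0}^{t_1}(y-\mathrm y)^T(u-\mathrm u)\,dt$ along all trajectories; output-strictly passive if additionally there is $\rho>0$ with $S(x(t_1))-S(x(t_0))\le\int_{t_0}^{t_1}[-\rho\|y-\mathrm y\|^2+(y-\mathrm y)^T(u-\mathrm u)]dt$. A system is MEICMP (maximal equilibrium-independent cyclically monotone passive) if it is passive with respect to every steady-state input-output pair and its steady-state input-output relation is maximal CM. Integral functions and problems: every maximal CM relation $R$ equals the subdifferential $\partial F$ of a closed proper convex $F:\mathbb R^d\to\mathbb R\cup\{+\infty\}$, unique up to an additive constant, called its integral function. Let $K_i$, $\Gamma_e$ be integral functions with $\partial K_i=k_i$, $\partial\Gamma_e=\gamma_e$; $K(\mathrm u)=\sum_iK_i(\mathrm u_i)$, $\Gamma(\zeta)=\sum_e\Gamma_e(\zeta_e)$; $F^\star(y)=\sup_u\{y^Tu-F(u)\}$ denotes the convex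 conjugate. (OPP): minimize $K^\star(\mathrm y)+\Gamma(\zeta)$ over $(\mathrm y,\zeta)$ subject to $\mathcal E^T\mathrm y=\zeta$. (OFP): minimize $K(\mathrm u)+\Gamma^\star(\mu)$ over $(\mathrm u,\mu)$ subject to $\mathrm u=-\mathcal E\mu$. *)

From Stdlib Require Import Reals ClassicalEpsilon.
From HB Require Import structures.
From mathcomp Require Import all_boot.

Set Implicit Arguments.
Unset Strict Implicit.
Unset Printing Implicit Defensive.

Open Scope R_scope.

Inductive erx : Type := EFin (r : R) | EPInf | EMInf.

Definition ele (a b : erx) : Prop :=
  match a, b with
  | EMInf, _ => True
  | _, EPInf => True
  | EFin x, EFin y => x <= y
  | _, _ => False
  end.

(* inf-addition: +oo absorbs (convention used in minimization problems) *)
Definition eadd (a b : erx) : erx :=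
  match a, b with
  | EPInf, _ | _, EPInf => EPInf
  | EMInf, _ | _, EMInf => EMInf
  | EFin x, EFin y => EFin (x + y)
  end.

Definition esup (S : R -> Prop) : erx :=
  match excluded_middle_informative (exists r, S r) with
  | left Hne =>
      match excluded_middle_informative (bound S) with
      | left Hb => EFin (proj1_sig (completeness S Hb Hne))
      | right _ => EPInf
      end
  | right _ => EMInf
  end.

Definition Vec (d : nat) := 'I_d -> R.
Definition vzero (d : nat) : Vec d := fun _ => 0.
Definition vsub (d : nat) (x y : Vec d) : Vec d := fun k => x k - y k.
Definition vadd (d : nat) (x y : Vec d) : Vec d := fun k => x k + y k.
Definition vscale (d : nat) (t : R) (x : Vec d) : Vec d := fun k => t * x k.
Definition vdot (d : nat) (x y : Vec d) : R := \big[Rplus/0]_(k < d) (x k * y k).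

(* stacked vectors: one R^d block per vertex (or per edge) *)
Definition sdot (n d : nat) (x y : 'I_n -> Vec d) : R :=
  \big[Rplus/0]_(i < n) vdot (x i) (y i).

Definition conjugate (V : Type) (dot : V -> V -> R) (F : V -> erx) (y : V) : erx :=
  match excluded_middle_informative (exists u, F u = EMInf) with
  | left _ => EPInf
  | right _ => esup (fun r => exists u r', F u = EFin r' /\ r = dot y u - r')
  end.

Definition proper_fn (d : nat) (F : Vec d -> erx) : Prop :=
  (forall u, F u <> EMInf) /\ (exists u, F u <> EPInf).

(* convex: the epigraph is convex *)
Definition convex_fn (d : nat) (F : Vec d -> erx) : Prop :=
  forall (x y : Vec d) (a b t : R), 0 <= t <= 1 ->
    ele (F x) (EFin a) -> ele (F y) (EFin b) ->
    ele (F (vadd (vscale t x) (vscale (1 - t) y))) (EFin (t * a + (1 - t) * b)).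

(* closed: the epigraph is (sequentially) closed in R^d x R *)
Definition closed_fn (d : nat) (F : Vec d -> erx) : Prop :=
  forall (xs : nat -> Vec d) (as_ : nat -> R) (x : Vec d) (a : R),
    (forall j, ele (F (xs j)) (EFin (as_ j))) ->
    (forall k, Un_cv (fun j => xs j k) (x k)) ->
    Un_cv as_ a ->
    ele (F x) (EFin a).

Definition subdiff (d : nat) (F : Vec d -> erx) (u y : Vec d) : Prop :=
  exists r, F u = EFin r /\
    forall v, ele (EFin (r + vdot y (vsub v u))) (F v).

Definition integral_function (d : nat) (Rel : Vec d -> Vec d -> Prop)
    (F : Vec d -> erx) : Prop :=
  closed_fn F /\ proper_fn F /\ convex_fn F /\
  (forall u y, Rel u y <-> subdiff F u y).

Definition prevN (N i : nat) : nat := if i == 0%N then N.-1 else i.-1.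

(* indices 0..N-1 with u_{-1} := u_{N-1}  (same as 1..N with u_0 = u_N) *)
Definition cyc_mono (d : nat) (Rel : Vec d -> Vec d -> Prop) : Prop :=
  forall (N : nat) (us ys : nat -> Vec d), (0 < N)%N ->
    (forall i, (i < N)%N -> Rel (us i) (ys i)) ->
    0 <= \big[Rplus/0]_(i < N) vdot (ys i) (vsub (us i) (us (prevN N i))).

Definition max_cyc_mono (d : nat) (Rel : Vec d -> Vec d -> Prop) : Prop :=
  cyc_mono Rel /\
  forall Rel' : Vec d -> Vec d -> Prop, cyc_mono Rel' ->
    (forall u y, Rel u y -> Rel' u y) -> (forall u y, Rel' u y -> Rel u y).

(* ---------- systems  dx/dt = F(x,u), y = H(x,u) with state in R^p ---------- *)
Definition ss_rel (p d : nat) (F : Vec p -> Vec d -> Vec p) (H : Vec p -> Vec d -> Vec d)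
    (u y : Vec d) : Prop :=
  exists x : Vec p, F x u = @vzero p /\ y = H x u.

Definition passive_wrt (p d : nat) (F : Vec p -> Vec d -> Vec p)
    (H : Vec p -> Vec d -> Vec d) (ub yb : Vec d) : Prop :=
  exists S : Vec p -> R, (forall x, 0 <= S x) /\
    forall (x : R -> Vec p) (u : R -> Vec d) (t0 t1 : R), t0 <= t1 ->
      (forall t j, derivable_pt_lim (fun s => x s j) t (F (x t) (u t) j)) ->
      forall pr : Riemann_integrable
          (fun t => vdot (vsub (H (x t) (u t)) yb) (vsub (u t) ub)) t0 t1,
        S (x t1) - S (x t0) <= RiemannInt pr.

Definition MEICMP (p d : nat) (F : Vec p -> Vec d -> Vec p)
    (H : Vec p -> Vec d -> Vec d) : Prop :=
  (forall ub yb, ss_rel F H ub yb -> passive_wrt F H ub yb) /\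
  max_cyc_mono (ss_rel F H).

(* incidence matrix: edge e = (src e, dst e), E_{src e, e} = -1, E_{dst e, e} = 1 *)
Definition inc (n m : nat) (src dst : 'I_m -> 'I_n) (i : 'I_n) (e : 'I_m) : R :=
  if i == dst e then 1 else if i == src e then -1 else 0.

(* (E ⊗ I_d)^T y *)
Definition ETy (n m d : nat) (src dst : 'I_m -> 'I_n) (y : 'I_n -> Vec d) : 'I_m -> Vec d :=
  fun e k => \big[Rplus/0]_(i < n) (inc src dst i e * y i k).

(* -(E ⊗ I_d) mu *)
Definition mEmu (n m d : nat) (src dst : 'I_m -> 'I_n) (mu : 'I_m -> Vec d) : 'I_n -> Vec d :=
  fun i k => - \big[Rplus/0]_(e < m) (inc src dst i e * mu e k).

Definition closed_loop_ss (n m d : nat) (src dst : 'I_m -> 'I_n)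
    (W : Type) (w : 'I_n -> W) (p : 'I_n -> nat)
    (f : forall i, Vec (p i) -> Vec d -> W -> Vec (p i))
    (h : forall i, Vec (p i) -> Vec d -> W -> Vec d)
    (q : 'I_m -> nat)
    (phi : forall e, Vec (q e) -> Vec d -> Vec (q e))
    (psi : forall e, Vec (q e) -> Vec d -> Vec d)
    (u y : 'I_n -> Vec d) (zeta mu : 'I_m -> Vec d) : Prop :=
  exists (xs : forall i, Vec (p i)) (etas : forall e, Vec (q e)),
    (forall i, f i (xs i) (u i) (w i) = @vzero (p i)) /\
    (forall i, y i = h i (xs i) (u i) (w i)) /\
    (forall e, phi e (etas e) (zeta e) = @vzero (q e)) /\
    (forall e, mu e = psi e (etas e) (zeta e)) /\
    zeta = ETy src dst y /\
    u = mEmu src dst mu.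

Definition esum (N d : nat) (Fs : 'I_N -> Vec d -> erx) (x : 'I_N -> Vec d) : erx :=
  \big[eadd/EFin 0]_(i < N) Fs i (x i).

Definition OPP_obj (n m d : nat) (Ks : 'I_n -> Vec d -> erx) (Gs : 'I_m -> Vec d -> erx)
    (y : 'I_n -> Vec d) (zeta : 'I_m -> Vec d) : erx :=
  eadd (conjugate (@sdot n d) (esum Ks) y) (esum Gs zeta).

Definition OPP_optimal (n m d : nat) (src dst : 'I_m -> 'I_n)
    (Ks : 'I_n -> Vec d -> erx) (Gs : 'I_m -> Vec d -> erx)
    (y : 'I_n -> Vec d) (zeta : 'I_m -> Vec d) : Prop :=
  ETy src dst y = zeta /\
  forall y' zeta', ETy src dst y' = zeta' ->
    ele (OPP_obj Ks Gs y zeta) (OPP_obj Ks Gs y' zeta').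

Definition OFP_obj (n m d : nat) (Ks : 'I_n -> Vec d -> erx) (Gs : 'I_m -> Vec d -> erx)
    (u : 'I_n -> Vec d) (mu : 'I_m -> Vec d) : erx :=
  eadd (esum Ks u) (conjugate (@sdot m d) (esum Gs) mu).

Definition OFP_optimal (n m d : nat) (src dst : 'I_m -> 'I_n)
    (Ks : 'I_n -> Vec d -> erx) (Gs : 'I_m -> Vec d -> erx)
    (u : 'I_n -> Vec d) (mu : 'I_m -> Vec d) : Prop :=
  u = mEmu src dst mu /\
  forall u' mu', u' = mEmu src dst mu' ->
    ele (OFP_obj Ks Gs u mu) (OFP_obj Ks Gs u' mu').

From Stdlib Require Import Reals ClassicalEpsilon ChoiceFacts Lra.
From HB Require Import structures.
From mathcomp Require Import all_boot.

Set Implicit Arguments.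
Unset Strict Implicit.
Unset Printing Implicit Defensive.

Open Scope R_scope.

(** A closed-loop steady state is, componentwise, a point of the graphs of the
    subdifferentials [∂K_i] and [∂Γ_e].  By the Fenchel–Young equality this says
    that [K_i(u_i) + K_i*(y_i) = <y_i,u_i>] and [Γ_e(ζ_e) + Γ_e*(μ_e) = <μ_e,ζ_e>];
    summing and using [<y,-Eμ> + <μ,E^T y> = 0], the duality gap of (OFP)/(OPP)
    vanishes.  Conversely, by the Fenchel–Young inequality every term of a zero
    gap is tight.  Finally, the same inequality gives weak duality (the gap is
    nonnegative on feasible pairs), which turns a zero gap into optimality. *)

Lemma eadd_assoc : associative eadd.
Proof. by case=> [x||] [y||] [z||] //=; rewrite Rplus_assoc. Qed.

Lemma eadd_comm : commutative eadd.
Proof. by case=> [x||] [y||] //=; rewrite Rplus_comm. Qed.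

Lemma eadd_0l : left_id (EFin 0) eadd.
Proof. by case=> [x||] //=; rewrite Rplus_0_l. Qed.

HB.instance Definition _ :=
  Monoid.isComLaw.Build erx (EFin 0) eadd eadd_assoc eadd_comm eadd_0l.

Lemma Rplus_associative : associative Rplus.
Proof. by move=> x y z; rewrite Rplus_assoc. Qed.

HB.instance Definition _ :=
  Monoid.isComLaw.Build R 0 Rplus Rplus_associative Rplus_comm Rplus_0_l.

Lemma eadd_EFinP (X Y : erx) (r : R) :
  eadd X Y = EFin r -> exists a b, [/\ X = EFin a, Y = EFin b & r = a + b].
Proof. by case: X Y => [a||] [b||] //= [<-]; exists a, b. Qed.

Lemma ele_eadd (a b : R) (X Y : erx) :
  ele (EFin a) X -> ele (EFin b) Y -> ele (EFin (a + b)) (eadd X Y).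
Proof. by case: X Y => [x||] [y||] //=; lra. Qed.

Lemma eadd_EFin_ele_eq (a b : R) (X Y : erx) :
  ele (EFin a) X -> ele (EFin b) Y -> eadd X Y = EFin (a + b) ->
  X = EFin a /\ Y = EFin b.
Proof.
by case: X Y => [x||] [y||] //= aX bY [xy]; split; congr EFin; lra.
Qed.

Lemma ele_eadd_cancel (X Y Z : erx) :
  eadd X Y = EFin 0 -> ele (EFin 0) (eadd Z Y) -> ele X Z.
Proof.
move=> /eadd_EFinP [x [y [-> -> xy]]].
by case: Z => [z||] //=; lra.
Qed.

Lemma esup_ub (S : R -> Prop) (r : R) : S r -> ele (EFin r) (esup S).
Proof.
move=> Sr; rewrite /esup.
case: excluded_middle_informative => [Sne|]; last by case; exists r.
case: excluded_middle_informative => [Sb|] //.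
by case: (completeness S Sb Sne) => s [s_ub _] /=; apply: s_ub.
Qed.

Lemma esup_max (S : R -> Prop) (r : R) :
  S r -> (forall r', S r' -> r' <= r) -> esup S = EFin r.
Proof.
move=> Sr r_ub; rewrite /esup.
case: excluded_middle_informative => [Sne|]; last by case; exists r.
case: excluded_middle_informative => [Sb|]; last by case; exists r.
case: (completeness S Sb Sne) => s [s_ub s_lub] /=.
by congr EFin; apply: Rle_antisym; [apply: s_lub | apply: s_ub].
Qed.

Section FenchelYoung.

Variables (V : Type) (dot : V -> V -> R) (F : V -> erx).

Definition is_subgradient (x y : V) : Prop :=
  exists r, F x = EFin r /\ forall v, ele (EFin (r + (dot y v - dot y x))) (F v).

Hypothesis F_notMInf : forall v, F v <> EMInf.

Lemma conjugateE (y : V) :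
  conjugate dot F y = esup (fun r => exists v s, F v = EFin s /\ r = dot y v - s).
Proof. by rewrite /conjugate; case: excluded_middle_informative => // -[v /F_notMInf]. Qed.

Lemma fenchel_young (x y : V) : ele (EFin (dot y x)) (eadd (F x) (conjugate dot F y)).
Proof.
rewrite conjugateE; set S := fun r => _.
case Fx: (F x) => [a||] //; last by move/F_notMInf: Fx.
have : ele (EFin (dot y x - a)) (esup S) by apply: esup_ub; exists x, a.
by case: esup => [b||] //=; lra.
Qed.

Lemma fenchel_young_eq (x y : V) :
  is_subgradient x y -> eadd (F x) (conjugate dot F y) = EFin (dot y x).
Proof.
move=> [r [Fx x_sub]]; rewrite Fx conjugateE (@esup_max _ (dot y x - r)) /=.
- by congr EFin; ring.
- by exists x, r.
- by move=> _ [v [s [Fv ->]]]; move: (x_sub v); rewrite Fv /=; lra.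
Qed.

Lemma subgradient_of_fenchel_young_eq (x y : V) :
  eadd (F x) (conjugate dot F y) = EFin (dot y x) -> is_subgradient x y.
Proof.
move=> /eadd_EFinP [a [b [Fx Cy ab]]]; exists a; split=> // v.
by move: (fenchel_young v y); rewrite Cy; case: (F v) => [s||] //=; lra.
Qed.

End FenchelYoung.

Lemma big_Rminus (N : nat) (f g : 'I_N -> R) :
  \big[Rplus/0]_(i < N) (f i - g i) =
  \big[Rplus/0]_(i < N) f i - \big[Rplus/0]_(i < N) g i.
Proof. by apply: (big_rec3 (fun r s t => r = s - t)) => [|i r s t _ ->]; ring. Qed.

Lemma vdot_subr (d : nat) (y a b : Vec d) : vdot y (vsub a b) = vdot y a - vdot y b.
Proof. by rewrite /vdot -big_Rminus; apply: eq_bigr => k _; rewrite /vsub; ring. Qed.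

Lemma subdiff_is_subgradient (d : nat) (F : Vec d -> erx) (u y : Vec d) :
  subdiff F u y <-> is_subgradient (@vdot d) F u y.
Proof. by split=> -[r [Fu u_sub]]; exists r; split=> // v; move: (u_sub v); rewrite vdot_subr. Qed.

Section SeparableSum.

Variables (N d : nat) (Fs : 'I_N -> Vec d -> erx).

Lemma esum_ge (a : 'I_N -> R) (x : 'I_N -> Vec d) :
  (forall i, ele (EFin (a i)) (Fs i (x i))) ->
  ele (EFin (\big[Rplus/0]_(i < N) a i)) (esum Fs x).
Proof.
move=> a_le; rewrite /esum.
apply: (big_rec2 (fun r X => ele (EFin r) X)) => [|i r X _]; first exact: Rle_refl.
exact: ele_eadd.
Qed.

Lemma esum_notMInf : (forall i v, Fs i v <> EMInf) -> forall x, esum Fs x <> EMInf.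
Proof.
move=> Fs_notMInf x; rewrite /esum.
apply: (big_rec (fun X => X <> EMInf)) => // i X _.
by move: (Fs_notMInf i (x i)); case: (Fs i (x i)) => [a||] //; case: X.
Qed.

Lemma esum_subgradient (x y : 'I_N -> Vec d) :
  (forall i, subdiff (Fs i) (x i) (y i)) -> is_subgradient (@sdot N d) (esum Fs) x y.
Proof.
move=> x_sub; have [r r_sub] := choice _ x_sub.
exists (\big[Rplus/0]_(i < N) r i); split.
  rewrite /esum; apply: (big_rec2 (fun s X => X = EFin s)) => // i s X _ ->.
  by case: (r_sub i) => ->.
move=> v; have := @esum_ge (fun i => r i + (vdot (y i) (v i) - vdot (y i) (x i))) v.
rewrite big_split big_Rminus; apply=> i.
by case: (r_sub i) => _ /(_ (v i)); rewrite vdot_subr.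
Qed.

Lemma subdiff_of_esum_subgradient (x y : 'I_N -> Vec d) :
  is_subgradient (@sdot N d) (esum Fs) x y -> forall i, subdiff (Fs i) (x i) (y i).
Proof.
(* Test the subgradient inequality of the sum at [x] moved in coordinate [i] only. *)
move=> [r [Fx x_sub]] i; apply/subdiff_is_subgradient.
pose rest := \big[eadd/EFin 0]_(j < N | j != i) Fs j (x j).
pose drest := \big[Rplus/0]_(j < N | j != i) vdot (y j) (x j).
have esum_at_i z : (forall j, j != i -> z j = x j) ->
    esum Fs z = eadd (Fs i (z i)) rest /\ sdot y z = vdot (y i) (z i) + drest.
  move=> zx; rewrite /esum /sdot (bigD1 i) // [in X in _ /\ X](bigD1 i) //.
  by split; apply: congr1; apply: eq_bigr => j /zx ->.
have [esum_x sdot_x] := esum_at_i x (fun _ _ => erefl).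
move: Fx; rewrite esum_x => /eadd_EFinP [a [s [Fxi rest_s r_as]]].
exists a; split=> // v.
pose xv := @dfwith _ (fun=> Vec d) x i v.
have [|esum_v sdot_v] := esum_at_i xv; first by move=> j ij; rewrite /xv dfwith_out // eq_sym.
move: (x_sub xv); rewrite esum_v sdot_v sdot_x rest_s /xv dfwith_in.
by case: (Fs i v) => [b||] //=; lra.
Qed.

End SeparableSum.

Lemma big_Ropp (N : nat) (f : 'I_N -> R) :
  \big[Rplus/0]_(i < N) - f i = - \big[Rplus/0]_(i < N) f i.
Proof. by apply: (big_rec2 (fun r s => r = - s)) => [|i r s _ ->]; ring. Qed.

Lemma big_Rmult_l (N : nat) (c : R) (f : 'I_N -> R) :
  \big[Rplus/0]_(i < N) (c * f i) = c * \big[Rplus/0]_(i < N) f i.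
Proof. by apply: (big_rec2 (fun r s => r = c * s)) => [|i r s _ ->]; ring. Qed.

Lemma sdot_mEmu_ETy (n m d : nat) (src dst : 'I_m -> 'I_n)
    (y : 'I_n -> Vec d) (mu : 'I_m -> Vec d) :
  sdot y (mEmu src dst mu) + sdot mu (ETy src dst y) = 0.
Proof.
pose T i e k := inc src dst i e * y i k * mu e k.
pose S := \big[Rplus/0]_(i < n) \big[Rplus/0]_(e < m) \big[Rplus/0]_(k < d) T i e k.
have -> : sdot y (mEmu src dst mu) = - S.
  rewrite /S -big_Ropp; apply: eq_bigr => i _.
  rewrite exchange_big -big_Ropp; apply: eq_bigr => k _.
  rewrite /mEmu Ropp_mult_distr_r_reverse -big_Rmult_l; congr Ropp.
  by apply: eq_bigr => e _; rewrite /T; ring.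
suff -> : sdot mu (ETy src dst y) = S by ring.
rewrite /S exchange_big; apply: eq_bigr => e _.
rewrite exchange_big; apply: eq_bigr => k _.
by rewrite /ETy -big_Rmult_l; apply: eq_bigr => i _; rewrite /T; ring.
Qed.

Section Duality.

Variables (n m d : nat) (src dst : 'I_m -> 'I_n).
Variables (Ks : 'I_n -> Vec d -> erx) (Gs : 'I_m -> Vec d -> erx).
Hypotheses (Ks_notMInf : forall i v, Ks i v <> EMInf)
           (Gs_notMInf : forall e v, Gs e v <> EMInf).

Lemma duality_gapE u mu y zeta :
  eadd (OFP_obj Ks Gs u mu) (OPP_obj Ks Gs y zeta) =
  eadd (eadd (esum Ks u) (conjugate (@sdot n d) (esum Ks) y))
       (eadd (esum Gs zeta) (conjugate (@sdot m d) (esum Gs) mu)).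
Proof.
rewrite /OFP_obj /OPP_obj.
case: (esum Ks u) (esum Gs zeta) (conjugate _ (esum Ks) y) (conjugate _ (esum Gs) mu)
  => [a||] [b||] [c||] [e||] //=; congr EFin; ring.
Qed.

Let K_notMInf := esum_notMInf Ks_notMInf.
Let G_notMInf := esum_notMInf Gs_notMInf.

Lemma weak_duality u mu y zeta :
  u = mEmu src dst mu -> ETy src dst y = zeta ->
  ele (EFin 0) (eadd (OFP_obj Ks Gs u mu) (OPP_obj Ks Gs y zeta)).
Proof.
move=> -> <-; rewrite duality_gapE -(sdot_mEmu_ETy src dst y mu).
by apply: ele_eadd; apply: fenchel_young.
Qed.

Lemma optimal_of_zero_gap u mu y zeta :
  u = mEmu src dst mu -> ETy src dst y = zeta ->
  eadd (OFP_obj Ks Gs u mu) (OPP_obj Ks Gs y zeta) = EFin 0 ->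
  OFP_optimal src dst Ks Gs u mu /\ OPP_optimal src dst Ks Gs y zeta.
Proof.
move=> feas_u feas_y gap0; split.
  split=> // u' mu' feas_u'.
  by apply: ele_eadd_cancel gap0 _; apply: weak_duality.
split=> // y' zeta' feas_y'; rewrite eadd_comm in gap0.
by apply: ele_eadd_cancel gap0 _; rewrite eadd_comm; apply: weak_duality.
Qed.

Lemma zero_gap_iff_subdiff u mu y zeta :
  u = mEmu src dst mu -> ETy src dst y = zeta ->
  eadd (OFP_obj Ks Gs u mu) (OPP_obj Ks Gs y zeta) = EFin 0 <->
  (forall i, subdiff (Ks i) (u i) (y i)) /\ (forall e, subdiff (Gs e) (zeta e) (mu e)).
Proof.
move=> feas_u feas_y.
rewrite duality_gapE -(sdot_mEmu_ETy src dst y mu) -feas_u feas_y; split.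
  move=> /(eadd_EFin_ele_eq (fenchel_young (@sdot n d) K_notMInf u y)
                           (fenchel_young (@sdot m d) G_notMInf zeta mu)) [FY_K FY_G].
  split; apply: subdiff_of_esum_subgradient; exact: subgradient_of_fenchel_young_eq.
by move=> [sub_K sub_G]; rewrite !fenchel_young_eq //; apply: esum_subgradient.
Qed.

End Duality.

Lemma closed_loop_ss_iff_subdiff (n m d : nat) (src dst : 'I_m -> 'I_n)
    (W : Type) (w : 'I_n -> W) (p : 'I_n -> nat)
    (f : forall i, Vec (p i) -> Vec d -> W -> Vec (p i))
    (h : forall i, Vec (p i) -> Vec d -> W -> Vec d)
    (q : 'I_m -> nat)
    (phi : forall e, Vec (q e) -> Vec d -> Vec (q e))
    (psi : forall e, Vec (q e) -> Vec d -> Vec d)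
    (Ks : 'I_n -> Vec d -> erx) (Gs : 'I_m -> Vec d -> erx)
    (u y : 'I_n -> Vec d) (zeta mu : 'I_m -> Vec d) :
  (forall i a b, ss_rel (fun x a => f i x a (w i)) (fun x a => h i x a (w i)) a b <->
                 subdiff (Ks i) a b) ->
  (forall e a b, ss_rel (phi e) (psi e) a b <-> subdiff (Gs e) a b) ->
  closed_loop_ss src dst w f h phi psi u y zeta mu <->
  [/\ forall i, subdiff (Ks i) (u i) (y i), forall e, subdiff (Gs e) (zeta e) (mu e),
      zeta = ETy src dst y & u = mEmu src dst mu].
Proof.
move=> ssK ssG; split.
  move=> [xs [etas [fx [hx [phie [psie [zetaE uE]]]]]]].
  split=> // [i | e]; first by apply/ssK; exists (xs i).
  by apply/ssG; exists (etas e).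
move=> [subK subG zetaE uE].
have [xs xsP] := non_dep_dep_functional_choice choice (fun i => Vec (p i)) _
  (fun i => proj2 (ssK i _ _) (subK i)).
have [etas etasP] := non_dep_dep_functional_choice choice (fun e => Vec (q e)) _
  (fun e => proj2 (ssG e _ _) (subG e)).
exists xs, etas; do !split=> //.
- by move=> i; case: (xsP i).
- by move=> i; case: (xsP i).
- by move=> e; case: (etasP e).
- by move=> e; case: (etasP e).
Qed.

Theorem mainTheorem3 (d n m : nat) (Hd : (0 < d)%N)
    (src dst : 'I_m -> 'I_n) (Hnoloop : forall e, src e != dst e)
    (W : Type) (w : 'I_n -> W) (p : 'I_n -> nat)
    (f : forall i, Vec (p i) -> Vec d -> W -> Vec (p i))
    (h : forall i, Vec (p i) -> Vec d -> W -> Vec d)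
    (q : 'I_m -> nat)
    (phi : forall e, Vec (q e) -> Vec d -> Vec (q e))
    (psi : forall e, Vec (q e) -> Vec d -> Vec d)
    (HA : forall i, MEICMP (fun x u => f i x u (w i)) (fun x u => h i x u (w i)))
    (HC : forall e, MEICMP (phi e) (psi e))
    (Ks : 'I_n -> Vec d -> erx) (Gs : 'I_m -> Vec d -> erx)
    (HK : forall i, integral_function (ss_rel (fun x u => f i x u (w i))
                                              (fun x u => h i x u (w i))) (Ks i))
    (HG : forall e, integral_function (ss_rel (phi e) (psi e)) (Gs e))
    (u y : 'I_n -> Vec d) (zeta mu : 'I_m -> Vec d) :
  closed_loop_ss src dst w f h phi psi u y zeta mu
  <->
  (OFP_optimal src dst Ks Gs u mu /\ OPP_optimal src dst Ks Gs y zeta /\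
   eadd (OFP_obj Ks Gs u mu) (OPP_obj Ks Gs y zeta) = EFin 0).
Proof.
have ssK i := proj2 (proj2 (proj2 (HK i))).
have ssG e := proj2 (proj2 (proj2 (HG e))).
have Ks_notMInf i := proj1 (proj1 (proj2 (HK i))).
have Gs_notMInf e := proj1 (proj1 (proj2 (HG e))).
apply: iff_trans (closed_loop_ss_iff_subdiff src dst u y zeta mu ssK ssG) _; split.
  move=> [subK subG zetaE uE].
  have gap0 := proj2 (zero_gap_iff_subdiff Ks_notMInf Gs_notMInf uE (esym zetaE))
                     (conj subK subG).
  by have [] := optimal_of_zero_gap Ks_notMInf Gs_notMInf uE (esym zetaE) gap0.
move=> [[uE _] [[zetaE _] gap0]].
have [subK subG] := proj1 (zero_gap_iff_subdiff Ks_notMInf Gs_notMInf uE zetaE) gap0.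
by split.
Qed.
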